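(* Let $r\ge 1$ and $t\ge 3$ be integers and $n=r(t-1)+2$. Then $q(K_1\nabla L_{r,t-1})<n+2t-3$.
   Context: All graphs are finite and simple. $q(G)$ denotes the largest eigenvalue of the signless Laplacian matrix $Q(G)=D(G)+A(G)$ of $G$. For graphs $G,H$ on disjoint vertex sets, $G\nabla H$ is their join (all edges between $V(G)$ and $V(H)$ added), and $rK_s$ denotes the disjoint union of $r$ copies of $K_s$. $L_{r,s}=K_1\nabla rK_s$, i.e. $r$ copies of $K_{s+1}$ sharing exactly one common vertex. Thus $K_1\nabla L_{r,t-1}$ has $r(t-1)+2=n$ vertices. *)

From HB Require Import structures.
From mathcomp Require Import all_boot all_order all_algebra.
From mathcomp Require Import polyrcf.
Set Implicit Arguments. Unset Strict Implicit. Unset Printing Implicit Defensive.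
Import Order.TTheory GRing.Theory Num.Theory.
Local Open Scope ring_scope.

(* A finite simple graph is a symmetric irreflexive relation on a finType. *)

Definition gjoin (T1 T2 : finType) (e1 : rel T1) (e2 : rel T2) : rel (T1 + T2) :=
  fun x y => match x, y with
             | inl a, inl b => e1 a b
             | inr a, inr b => e2 a b
             | _, _ => true
             end.

Definition complete_graph (T : finType) : rel T := fun x y => x != y.
Definition K1 : rel unit := fun x y => x != y.

(* r K_s : r disjoint copies of K_s, on vertex set 'I_r * 'I_s. *)
Definition rK (r s : nat) : rel ('I_r * 'I_s) :=
  fun x y => (x.1 == y.1) && (x.2 != y.2).
Arguments rK r s : clear implicits.

Definition L_graph (r s : nat) := gjoin K1 (rK r s).
Arguments L_graph r s : clear implicits.

Definition adjmx (R : nzRingType) (T : finType) (e : rel T) : 'M[R]_#|T| :=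
  \matrix_(i, j) (e (enum_val i) (enum_val j))%:R.

Definition degmx (R : nzRingType) (T : finType) (e : rel T) : 'M[R]_#|T| :=
  diag_mx (\row_i \sum_j adjmx R e i j).
Definition signless_laplacian (R : nzRingType) (T : finType) (e : rel T) :=
  degmx R e + adjmx R e.

(* q(G): the largest eigenvalue of Q(G), i.e. the largest (real) root of its
   characteristic polynomial (rootsR lists the roots in increasing order;
   Q is real symmetric so all its eigenvalues are real). *)
Definition q_index (R : rcfType) (T : finType) (e : rel T) : R :=
  last 0 (rootsR (char_poly (signless_laplacian R e))).

(* Q(G) is entrywise nonnegative, so for every positive weight w and every
   eigenvalue a, |a| <= max_j (w^T Q)_j / w_j: evaluate a left eigenvector v
   at a coordinate j maximising |v_j| / w_j.  Write K_1 \nabla L_{r,s} (s = t-1)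
   as two hubs joined to everything plus r disjoint cliques K_s, and weight the
   hubs by rs and the clique vertices by 2.  The weighted column sums are then
   rs(rs+4) at a hub and 2(rs+2s) at a clique vertex, so for s >= 2 we get
   q <= rs + 2s = n + 2t - 4. *)

From HB Require Import structures.
From mathcomp Require Import all_boot all_order all_algebra.
From mathcomp Require Import polyrcf ring zify.
Import Order.TTheory GRing.Theory Num.Theory.
Local Open Scope ring_scope.

Lemma eigenvalue_le_weighted_colsum (R : realFieldType) n (M : 'M[R]_n)
    (w : 'I_n -> R) mu :
  (forall i j, 0 <= M i j) -> (forall i, 0 < w i) ->
  (forall j, \sum_i w i * M i j <= mu * w j) ->
  forall a, eigenvalue M a -> `|a| <= mu.
Proof.
move=> M_ge0 w_gt0 colsum_le a /eigenvalueP[v vM v_neq0].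
have [k [i0]] := matrix0Pn _ v_neq0; rewrite [k]ord1 => vi0_neq0.
have [j _ j_max] := @arg_maxP _ _ _ i0 xpredT (fun i => `|v 0 i| / w i) isT.
set c := `|v 0 j| / w j in j_max.
have v_le i : `|v 0 i| <= c * w i by rewrite -ler_pdivrMr //; exact: j_max.
have c_gt0 : 0 < c by apply: lt_le_trans (j_max i0 isT); rewrite divr_gt0 ?normr_gt0.
have vj_gt0 : 0 < `|v 0 j| by move: c_gt0; rewrite pmulr_lgt0 ?invr_gt0.
have vMj : a * v 0 j = \sum_i v 0 i * M i j.
  by have := congr1 (fun u : 'rV_n => u 0 j) vM; rewrite !mxE.
rewrite -(ler_pM2r vj_gt0) -normrM vMj.
apply: le_trans (ler_norm_sum _ _ _) _.
apply: (@le_trans _ _ (c * \sum_i w i * M i j)).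
  rewrite mulr_sumr; apply: ler_sum => i _.
  by rewrite normrM (ger0_norm (M_ge0 i j)) mulrA ler_wpM2r.
have -> : `|v 0 j| = c * w j by rewrite divfK ?gt_eqF.
by rewrite mulrCA ler_pM2l.
Qed.

Lemma signless_laplacianE (R : nzRingType) (T : finType) (e : rel T) i j :
  signless_laplacian R e i j =
  (\sum_z (e (enum_val i) z)%:R) *+ (i == j) + (e (enum_val i) (enum_val j))%:R.
Proof.
rewrite !mxE; congr (_ *+ _ + _).
rewrite (big_enum_val (fun z => (e (enum_val i) z)%:R)).
by apply: eq_bigr => k _; rewrite mxE.
Qed.

(* [0 <= mu] accounts for the default value [0] of [q_index] when the
   characteristic polynomial has no real root. *)
Lemma q_index_le (R : rcfType) (T : finType) (e : rel T) (W : T -> R) mu :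
  (forall x, 0 < W x) -> 0 <= mu ->
  (forall y, W y * \sum_z (e y z)%:R + \sum_x W x * (e x y)%:R <= mu * W y) ->
  q_index R e <= mu.
Proof.
move=> W_gt0 mu_ge0 colsum_le; rewrite /q_index.
set Q := signless_laplacian R e.
have := mem_last 0 (rootsR (char_poly Q)); rewrite inE => /orP[/eqP-> //|].
rewrite -(roots_on_rootsR (monic_neq0 (char_poly_monic Q))) => /andP[_].
rewrite -eigenvalue_root_char => Q_eigen; apply: le_trans (ler_norm _) _.
apply: (@eigenvalue_le_weighted_colsum _ _ _ (W \o enum_val) _ _ _ _ _ Q_eigen) => //.
- by move=> i j; rewrite signless_laplacianE addr_ge0 ?mulrn_wge0 ?sumr_ge0.
- by move=> i; apply: W_gt0.
- move=> j; under eq_bigr do rewrite signless_laplacianE mulrDr.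
  rewrite big_split /= [X in X + _](bigD1 j) //= [X in _ + X + _]big1 ?addr0.
    by rewrite eqxx mulr1n -(big_enum_val (fun x => W x * (e x (enum_val j))%:R)).
  by move=> i /negbTE->; rewrite mulr0n mulr0.
Qed.

Lemma sum_unit (R : nmodType) (F : unit -> R) : \sum_i F i = F tt.
Proof. by rewrite (big_pred1 tt) // => [[]]. Qed.

Lemma rK_sym r s : symmetric (rK r s).
Proof. by move=> x y; rewrite /rK eq_sym [x.2 == _]eq_sym. Qed.

Lemma rK_degree (R : nzRingType) r s (p : 'I_r * 'I_s) :
  \sum_q (rK r s p q)%:R = s.-1%:R :> R.
Proof.
rewrite -(pair_big xpredT xpredT (fun i j => (rK r s p (i, j))%:R)) /=.
rewrite (bigD1 p.1) //= [X in _ + X]big1 ?addr0; last first.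
  by move=> i /negbTE i_neq; apply: big1 => j _; rewrite /rK eq_sym i_neq.
rewrite /rK /= eqxx -natr_sum (eq_bigr (fun j => (j != p.2 : nat))).
  by rewrite -big_mkcond sum1dep_card cardsE cardC1 card_ord.
by move=> j _; rewrite eq_sym.
Qed.

Section ConeOverWindmill.
Variables (R : rcfType) (r s : nat).
Hypothesis s_gt0 : (0 < s)%N.
Local Notation V := (unit + (unit + 'I_r * 'I_s))%type.
Local Notation G := (gjoin K1 (L_graph r s)).

Definition cone_weight (x : V) : R := if x is inr (inr _) then 2 else (r * s)%:R.

Lemma cone_weighted_colsum (y : V) :
  cone_weight y * \sum_z (G y z)%:R + \sum_x cone_weight x * (G x y)%:R =
  (if y is inr (inr _) then 2 * (r * s + 2 * s) else r * s * (r * s + 4))%:R.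
Proof.
case: y => [[]|[[]|p]] /=; rewrite !big_sumType /= !sum_unit /=.
1,2: by rewrite !sumr_const card_prod !card_ord; ring.
under [X in _ + (_ + (_ + X))]eq_bigr do rewrite rK_sym.
by rewrite -mulr_sumr rK_degree -subn1 natrB //; ring.
Qed.
End ConeOverWindmill.

Theorem lemma2p6 (R : rcfType) (r t : nat) :
  (1 <= r)%N -> (3 <= t)%N ->
  let n := (r * (t - 1) + 2)%N in
  q_index R (gjoin K1 (L_graph r (t - 1))) < (n + 2 * t - 3)%:R.
Proof.
move=> r_gt0; case: t => [|s] // s_ge2 /=; rewrite subSS subn0.
apply: (@le_lt_trans _ _ (r * s + 2 * s)%:R); last by rewrite ltr_nat; lia.
apply: (@q_index_le _ _ _ (cone_weight R r s)) => [y||y].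
- by case: y => [?|[?|?]]; rewrite /= ltr0n; lia.
- exact: ler0n.
rewrite cone_weighted_colsum; last by lia.
by case: y => [?|[?|?]]; rewrite /= -natrM ler_nat; nia.
Qed.
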